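(* Let $n\ge 3$ and $v\in A_n$. Then $$\mathrm{cyc}(v)=\begin{cases} n-\ell_{T(A_n)}(v) & \text{if } \ell_{T(A_n)}(v) \text{ is even},\\ n-\ell_{T(A_n)}(v)-1 & \text{if } \ell_{T(A_n)}(v)\text{ is odd}.\end{cases}$$
   Context: $A_n$ is the alternating group on $\{1,\dots,n\}$, $T(A_n)=\{(1\,2)(i\,j)\mid 1\le i<j\le n\}$, and $\ell_{T(A_n)}(v)=\min\{k\ge 0\mid v=t_1\cdots t_k,\ t_i\in T(A_n)\}$. $\mathrm{cyc}(v)$ is the number of cycles of $v$ in its disjoint cycle decomposition, fixed points counted. *)

From mathcomp Require Import all_boot all_order all_fingroup all_solvable.
From mathcomp Require Import alt.
Set Implicit Arguments. Unset Strict Implicit. Unset Printing Implicit Defensive.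
Local Open Scope group_scope.

(* Points 1..n are represented by 'I_n = {0,..,n-1}; the points 1 and 2 of
   the paper are the ordinals with values 0 and 1. *)

Definition TAn (n : nat) : {set {perm 'I_n}} :=
  [set t : {perm 'I_n} | [exists a : 'I_n, exists b : 'I_n, exists i : 'I_n,
     exists j : 'I_n, [&& nat_of_ord a == 0%N, nat_of_ord b == 1%N, (i < j)%N &
                          t == tperm a b * tperm i j]]].

Definition TAn_length_is (n : nat) (v : {perm 'I_n}) (k : nat) : Prop :=
  (exists s : seq {perm 'I_n},
      [/\ size s = k, all (fun t => t \in TAn n) s & v = \prod_(t <- s) t])
  /\ (forall s : seq {perm 'I_n},
      all (fun t => t \in TAn n) s -> v = \prod_(t <- s) t -> (k <= size s)%N).

(* number of cycles of v, fixed points included *)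
Definition cyc (n : nat) (v : {perm 'I_n}) : nat := #|porbits v|.

From mathcomp Require Import all_boot all_order all_fingroup all_solvable.
From mathcomp Require Import alt.
From mathcomp Require Import zify.
Set Implicit Arguments. Unset Strict Implicit. Unset Printing Implicit Defensive.
Local Open Scope group_scope.

(* Multiplying by a transposition changes the number of cycles by exactly
   one, so a product of k transpositions has at least n - k cycles, and
   splitting cycles one at a time writes v as a product of n - cyc v
   transpositions, an even number when v is even.  Since
   (1 2)(i j) (1 2)(i' j') = (a b)(i' j') with (a b) the conjugate of (i j)
   by (1 2), a product of k generators of T(A_n) is a product of k + (k mod 2)
   transpositions, and conversely any product of 2m transpositions is a
   product of 2m generators.  Hence the length k of v satisfies
   k <= n - cyc v <= k + (k mod 2), which pins down n - cyc v as the even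
   number among k and k + 1. *)

Section CycleCount.
Variable T : finType.
Implicit Types (s : {perm T}) (x y : T).

Lemma card_porbits1 : #|porbits (1 : {perm T})| = #|T|.
Proof.
rewrite /porbits (eq_imset _ (g := fun x => [set x])); last first.
  by move=> x; rewrite [@porbit]unlock cycle1 imset_set1 /aperm perm1.
by rewrite card_imset //; exact: set1_inj.
Qed.

Lemma card_porbits_le s : (#|porbits s| <= #|T|)%N.
Proof. exact: leq_imset_card. Qed.

Lemma card_porbits_mul_tperm_ge s x y :
  (#|porbits s| <= #|porbits (tperm x y * s)| + 1)%N.
Proof.
have := porbits_mul_tperm s x y => /=.
have [<-|_] := eqVneq x y; first by rewrite porbit_id; lia.
by case: (x \notin _); rewrite /= -?muln2; lia.
Qed.

Lemma card_porbits_mul_tperm_split s x : s x != x ->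
  #|porbits (tperm x (s x) * s)| = (#|porbits s| + 1)%N.
Proof.
move=> sx_x; have := porbits_mul_tperm s x (s x) => /=.
have -> : x \in porbit s (s x) by rewrite porbit_sym (mem_porbit _ 1).
by rewrite eq_sym sx_x; lia.
Qed.

Lemma card_porbits_prod_tperm (ts : seq (T * T)) :
  (#|T| <= #|porbits (\prod_(p <- ts) tperm p.1 p.2)| + size ts)%N.
Proof.
elim: ts => [|p ts IH]; first by rewrite big_nil card_porbits1 addn0.
rewrite big_cons /=; apply: leq_trans IH _.
by rewrite addnS -addSn leq_add2r -addn1 card_porbits_mul_tperm_ge.
Qed.

Lemma prod_tperm_card_porbits s : exists ts : seq (T * T),
  [/\ size ts = (#|T| - #|porbits s|)%N, all dpair ts &
      s = \prod_(p <- ts) tperm p.1 p.2].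
Proof.
move: {2}(#|T| - _)%N (erefl (#|T| - #|porbits s|)%N) => d.
elim: d s => [|d IH] s d_s.
  exists [::]; split; rewrite ?big_nil //; apply/permP => x; rewrite perm1.
  apply/eqP/negPn/negP => sx_x; have := card_porbits_mul_tperm_split sx_x.
  have := card_porbits_le (tperm x (s x) * s); lia.
have [x sx_x] : exists x, s x != x.
  case: (pickP (fun x => s x != x)) => [x sx_x | s_id]; first by exists x.
  have s1 : s = 1 by apply/permP => x; rewrite perm1; apply/eqP/negPn; rewrite s_id.
  by move: d_s; rewrite s1 card_porbits1 subnn.
have := card_porbits_mul_tperm_split sx_x.
have := card_porbits_le (tperm x (s x) * s) => le_s split_s.
have [ts [size_ts dts s_ts]] := IH (tperm x (s x) * s) ltac:(lia).
exists ((x, s x) :: ts); split.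
- rewrite /= size_ts split_s subnDA subn1 prednK // subn_gt0.
  by rewrite -addn1 -split_s.
- by rewrite /= eq_sym sx_x.
- by rewrite big_cons -s_ts tpermKg.
Qed.

Lemma odd_card_porbits_sub s : odd (#|T| - #|porbits s|) = odd_perm s.
Proof. by rewrite oddB ?card_porbits_le. Qed.

End CycleCount.

Lemma odd_sub_cyc n (v : {perm 'I_n}) : odd (n - cyc v) = odd_perm v.
Proof. by rewrite -{1}(card_ord n) odd_card_porbits_sub. Qed.

Lemma ex_min_size (A : finType) (P : pred (seq A)) : (exists s, P s) ->
  exists2 s, P s & forall s', P s' -> (size s <= size s')%N.
Proof.
move=> [s0 Ps0].
have ex_k : exists k, [exists t : k.-tuple A, P t].
  by exists (size s0); apply/existsP; exists (in_tuple s0).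
case: (ex_minnP ex_k) => k /existsP[t Pt] k_min.
exists t => // s' Ps'; rewrite size_tuple; apply: k_min.
by apply/existsP; exists (in_tuple s').
Qed.

Section TAnGenerators.
Variable n : nat.
Hypothesis n_gt1 : (1 < n)%N.

Definition pt1 : 'I_n := Ordinal (ltnW n_gt1).
Definition pt2 : 'I_n := Ordinal n_gt1.
Definition tAn (i j : 'I_n) : {perm 'I_n} := tperm pt1 pt2 * tperm i j.

Lemma tAn_TAn i j : i != j -> tAn i j \in TAn n.
Proof.
move=> ij; rewrite inE; apply/existsP; exists pt1; apply/existsP; exists pt2.
have [lt_ij | ge_ij] := ltnP i j.
  by apply/existsP; exists i; apply/existsP; exists j; rewrite lt_ij /tAn !eqxx.
have lt_ji : (j < i)%N.
  by rewrite ltn_neqAle ge_ij andbT; apply: contraNneq ij => /val_inj ->.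
by apply/existsP; exists j; apply/existsP; exists i; rewrite lt_ji /tAn (tpermC j) !eqxx.
Qed.

Lemma TAn_tAn t : t \in TAn n -> exists i j, t = tAn i j.
Proof.
rewrite inE => /existsP[a /existsP[b /existsP[i /existsP[j]]]].
case/and4P => /eqP a0 /eqP b1 _ /eqP ->.
have -> : a = pt1 by apply: val_inj.
have -> : b = pt2 by apply: val_inj.
by exists i, j.
Qed.

Lemma tAnM i j i' j' : tAn i j * tAn i' j' =
  tperm (tperm pt1 pt2 i) (tperm pt1 pt2 j) * tperm i' j'.
Proof. by rewrite -tpermJ /conjg tpermV /tAn !mulgA. Qed.

Lemma mul_tperm_tAn a b c d : tperm a b * tperm c d =
  tAn (tperm pt1 pt2 a) (tperm pt1 pt2 b) * tAn c d.
Proof. by rewrite tAnM !tpermK. Qed.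

(* Pair up consecutive factors; a leftover single factor is itself a
   product of two transpositions. *)
Lemma prod_TAn_tperm (s : seq {perm 'I_n}) : all (mem (TAn n)) s ->
  exists ts : seq ('I_n * 'I_n), size ts = (size s + odd (size s))%N /\
    \prod_(t <- s) t = \prod_(p <- ts) tperm p.1 p.2.
Proof.
have [m] := ubnP (size s); elim: m s => // m IH [|t1 [|t2 s]] /= size_s.
- by exists [::]; rewrite !big_nil.
- case/andP => /TAn_tAn[i [j ->]] _.
  by exists [:: (pt1, pt2); (i, j)]; rewrite big_seq1 !big_cons big_nil mulg1.
case/and3P => /TAn_tAn[i [j ->]] /TAn_tAn[i' [j' ->]] TAn_s.
have [ts [size_ts s_ts]] := IH s (ltnW (ltnSE size_s)) TAn_s.
exists [:: (tperm pt1 pt2 i, tperm pt1 pt2 j), (i', j') & ts]; split.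
  by rewrite /= size_ts negbK; lia.
by rewrite !big_cons s_ts mulgA tAnM /= mulgA.
Qed.

Lemma prod_tperm_TAn (ts : seq ('I_n * 'I_n)) :
  ~~ odd (size ts) -> all dpair ts -> exists s : seq {perm 'I_n},
  [/\ size s = size ts, all (mem (TAn n)) s &
      \prod_(p <- ts) tperm p.1 p.2 = \prod_(t <- s) t].
Proof.
have [m] := ubnP (size ts); elim: m ts => // m IH [|[a b] [|[c d] ts]] //= size_ts.
  by exists [::]; rewrite !big_nil.
rewrite negbK => even_ts /and3P[ab cd dts].
have [s [size_s TAn_s ts_s]] := IH ts (ltnW (ltnSE size_ts)) even_ts dts.
exists [:: tAn (tperm pt1 pt2 a) (tperm pt1 pt2 b), tAn c d & s]; split => /=.
- by rewrite size_s.
- by rewrite TAn_s !tAn_TAn // (inj_eq perm_inj).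
- by rewrite !big_cons ts_s mulgA mul_tperm_tAn !mulgA.
Qed.

Lemma Alt_prod_TAn v : v \in 'Alt_('I_n) -> exists s : seq {perm 'I_n},
  [/\ size s = (n - cyc v)%N, all (mem (TAn n)) s & v = \prod_(t <- s) t].
Proof.
move=> Alt_v; have [ts [size_ts dts v_ts]] := prod_tperm_card_porbits v.
rewrite card_ord -/(cyc v) in size_ts.
have even_ts : ~~ odd (size ts) by rewrite size_ts odd_sub_cyc -Alt_even.
have [s [size_s TAn_s ts_s]] := prod_tperm_TAn even_ts dts.
by exists s; rewrite size_s size_ts v_ts ts_s.
Qed.

Lemma cyc_prod_TAn (s : seq {perm 'I_n}) : all (mem (TAn n)) s ->
  (n <= cyc (\prod_(t <- s) t) + size s + odd (size s))%N.
Proof.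
move=> /prod_TAn_tperm[ts [size_ts ->]].
by rewrite -addnA -size_ts -[X in (X <= _)%N]card_ord card_porbits_prod_tperm.
Qed.

End TAnGenerators.

Lemma even_le_add_odd d k : ~~ odd d -> (k <= d)%N -> (d <= k + odd k)%N ->
  d = (k + odd k)%N.
Proof.
move=> even_d le_kd le_dk; apply/eqP; rewrite eqn_leq le_dk /=.
have [odd_k | _] := boolP (odd k); last by rewrite addn0.
rewrite addn1 ltn_neqAle le_kd andbT.
by apply: contraNneq even_d => <-.
Qed.

Theorem theorem6p3 (n : nat) (hn : (3 <= n)%N) (v : {perm 'I_n})
    (hv : v \in ('Alt_('I_n))%g) :
  exists k : nat, TAn_length_is v k /\
    cyc v = (if odd k then n - k - 1 else n - k)%N.
Proof.
have n_gt1 : (1 < n)%N by lia.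
have [s0 [size_s0 TAn_s0 v_s0]] := Alt_prod_TAn n_gt1 hv.
pose P s := all (mem (TAn n)) s && (v == \prod_(t <- s) t).
have [|s /andP[TAn_s /eqP v_s] s_min] := @ex_min_size _ P.
  by exists s0; rewrite /P TAn_s0 -v_s0 eqxx.
exists (size s); split.
  split=> [|s' TAn_s' v_s']; first by exists s.
  by apply: s_min; rewrite /P TAn_s' v_s' eqxx.
have upper : (size s <= n - cyc v)%N.
  by rewrite -size_s0 s_min // /P TAn_s0 -v_s0 eqxx.
have lower : (n - cyc v <= size s + odd (size s))%N.
  by rewrite leq_subLR addnA v_s cyc_prod_TAn.
have even_v : ~~ odd (n - cyc v) by rewrite odd_sub_cyc -Alt_even.
have := even_le_add_odd even_v upper lower.
have := card_porbits_le v; rewrite card_ord -/(cyc v).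
by case: (odd (size s)) => /= cyc_le_n; lia.
Qed.
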